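(* Let $f$ and $\ell$ be continuous and $\mathbb{X}\times\mathbb{U}$ be compact, and let strict dissipativity hold, i.e., there exist a bounded storage function $\lambda:\mathbb{X}\to\mathbb{R}$ and $\underline\alpha_{\tilde\ell}\in\mathcal{K}_\infty$ such that $\tilde\ell(x,u)=\ell(x,u)-\ell^\star+\lambda(x)-\lambda(f(x,u))\geq\underline\alpha_{\tilde\ell}(\|(x,u)\|_{\Pi^\star})$ for all $x\in\mathbb{X}$ and all $u\in\mathbb{U}$ with $f(x,u)\in\mathbb{X}$. Then there exists $\alpha_1\in\mathcal{K}_\infty$ such that for all $\varepsilon>0$ and all trajectories of length $T$ defined by $\hat x\in\mathbb{X}$ and $\hat u\in\mathbb{U}^T(\hat x)$ satisfying $\|(x_{\hat u}(k,\hat x),\hat u(k))\|_{\Pi^\star}\leq\varepsilon$ for all $k\in\{0,\dots,T-1\}$, it holds that \[ \sum_{k=0}^{T-1}\ell(x_{\hat u}(k,\hat x),\hat u(k))\leq (T+p^\star-1)\ell^\star+T\alpha_1(\varepsilon). \]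
   Context: System $x(k+1)=f(x(k),u(k))$ with constraints $x\in\mathbb{X}$, $u\in\mathbb{U}$, stage cost $\ell$; $x_u(k,x)$ is the state trajectory under input sequence $u$ from $x$, and $\mathbb{U}^T(x)$ the set of feasible input sequences of length $T$. A feasible $p$-periodic orbit is a $p$-tuple $\Pi\in(\mathbb{X}\times\mathbb{U})^p$ with $\Pi_{\mathbb{X}}((k+1)\bmod p)=f(\Pi(k))$; $\|(x,u)\|_\Pi=\min_k\|(x,u)-\Pi(k)\|$. $\ell^\star$ is the infimum over all feasible periodic orbits of the average cost $\frac1p\sum_{k=0}^{p-1}\ell(\Pi(k))$, and $\Pi^\star$ is an optimal orbit of period $p^\star$ attaining it. The stage cost $\ell$ is assumed non-negative without loss of generality (shifting $\ell$ by its minimum on the compact set does not change minimizers). *)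

From HB Require Import structures.
From mathcomp Require Import all_boot all_order all_algebra.
From mathcomp Require Import all_classical all_reals all_analysis.
Set Implicit Arguments. Unset Strict Implicit. Unset Printing Implicit Defensive.
Import Order.TTheory GRing.Theory Num.Theory.
Import numFieldNormedType.Exports.
Local Open Scope classical_set_scope.
Local Open Scope ring_scope.

Section Defs.
Variables (R : realType) (n m : nat).
Notation X := 'rV[R]_n.
Notation U := 'rV[R]_m.

Definition Kinf (a : R -> R) : Prop :=
  [/\ {within `[0, +oo[%classic, continuous a},
      {in `[0, +oo[ &, {mono a : x y / x < y}} ,
      a 0 = 0 &
      forall M : R, exists s : R, 0 <= s /\ M < a s].

Fixpoint traj (f : X -> U -> X) (x : X) (u : nat -> U) (k : nat) : X :=
  match k with
  | 0 => x
  | k'.+1 => f (traj f x u k') (u k')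
  end.

Definition feasible_inputs (Xs : set X) (Us : set U) (f : X -> U -> X)
    (T : nat) (x : X) (u : nat -> U) : Prop :=
  (forall k, (k < T)%N -> Us (u k)) /\
  (forall k, (k <= T)%N -> Xs (traj f x u k)).

Definition feasible_orbit (Xs : set X) (Us : set U) (f : X -> U -> X)
    (p : nat) (Pi : nat -> X * U) : Prop :=
  [/\ (0 < p)%N,
      (forall k, (k < p)%N -> Xs (Pi k).1 /\ Us (Pi k).2) &
      (forall k, (k < p)%N -> (Pi (k.+1 %% p)%N).1 = f (Pi k).1 (Pi k).2)].

Definition avg_cost (l : X -> U -> R) (p : nat) (Pi : nat -> X * U) : R :=
  (\sum_(k < p) l (Pi k).1 (Pi k).2) / p%:R.

Definition ell_star (Xs : set X) (Us : set U) (f : X -> U -> X)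
    (l : X -> U -> R) : R :=
  inf [set a | exists p Pi, feasible_orbit Xs Us f p Pi /\ a = avg_cost l p Pi].

(* ||(x,u)||_Pi = min_k ||(x,u) - Pi(k)||  (norm on X * U: max of norms) *)
Definition dist_orbit (p : nat) (Pi : nat -> X * U) (z : X * U) : R :=
  \big[Num.min/`|z - Pi 0%N|]_(k < p) `|z - Pi k|.

End Defs.

From HB Require Import structures.
From mathcomp Require Import all_boot all_order all_algebra.
From mathcomp Require Import all_classical all_reals all_analysis.
From mathcomp Require Import ring lra.
Import Order.TTheory GRing.Theory Num.Theory.
Import numFieldNormedType.Exports.
Local Open Scope classical_set_scope.
Local Open Scope ring_scope.
Set Implicit Arguments. Unset Strict Implicit. Unset Printing Implicit Defensive.

(* Along the optimal orbit the dissipation inequality holds with equality, so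
   l(Π k) = l* + λ(x_(k+1)) - λ(x_k), and storage differences between orbit
   states are at most (p* - 1) l*.  For δ small, a trajectory staying δ-close
   to the orbit shadows it: each step costs at most γ more than the orbit point
   it is near, and consecutive nearby orbit points are consecutive on the orbit,
   so the storage terms telescope to the bound (T + p* - 1) l* + T γ.  Writing
   P δ a for "tolerance δ admits margin a", the lower envelope
   s |-> inf {a + (max l) s / δ | P δ a} of these affine bounds is continuous,
   nondecreasing, zero at 0 and still a valid margin for tolerance s; adding
   the identity makes it K∞. *)

Section Envelope.
Variables (R : realType) (B : R) (P : R -> R -> Prop).
Hypothesis B_ge0 : 0 <= B.
Hypothesis P_small : forall γ, 0 < γ -> exists2 δ, 0 < δ & P δ γ.

Definition envelope_set (s : R) : set R :=
  [set v | exists δ a, [/\ 0 < δ, 0 <= a, P δ a & v = a + B * s / δ]].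

Definition envelope (s : R) : R := inf (envelope_set s).

Lemma envelope_set_neq0 s : envelope_set s !=set0.
Proof.
have [δ δ_gt0 Pδ] := P_small ltr01.
by exists (1 + B * s / δ), δ, 1.
Qed.

Lemma envelope_set_ge0 s : 0 <= s -> lbound (envelope_set s) 0.
Proof.
move=> s_ge0 _ [δ [a [δ_gt0 a_ge0 _ ->]]].
by rewrite addr_ge0 // divr_ge0 ?mulr_ge0 // ltW.
Qed.

Lemma envelope_le s δ a : 0 <= s -> 0 < δ -> 0 <= a -> P δ a ->
  envelope s <= a + B * s / δ.
Proof.
move=> s_ge0 δ_gt0 a_ge0 Pδa; apply: ge_inf; first by exists 0; exact: envelope_set_ge0.
by exists δ, a.
Qed.

Lemma envelope_ge0 s : 0 <= s -> 0 <= envelope s.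
Proof. by move=> s_ge0; apply: lb_le_inf; [exact: envelope_set_neq0|exact: envelope_set_ge0]. Qed.

Lemma le_envelope s t : 0 <= s -> s <= t -> envelope s <= envelope t.
Proof.
move=> s_ge0 le_st; apply: lb_le_inf; first exact: envelope_set_neq0.
move=> _ [δ [a [δ_gt0 a_ge0 Pδa ->]]].
apply: le_trans (envelope_le s_ge0 δ_gt0 a_ge0 Pδa) _.
by rewrite lerD2l ler_pM2r ?invr_gt0 // ler_wpM2l.
Qed.

(* the envelope is an infimum of affine functions with nonnegative intercept,
   so envelope s / s is nonincreasing *)
Lemma envelope_ratio s t : 0 < s -> s <= t -> s * envelope t <= t * envelope s.
Proof.
move=> s_gt0 le_st; have t_gt0 := lt_le_trans s_gt0 le_st.
suff : s / t * envelope t <= envelope s.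
  by rewrite -(ler_pM2l t_gt0) mulrA mulrCA divff ?gt_eqF // mulr1.
apply: lb_le_inf; first exact: envelope_set_neq0.
move=> _ [δ [a [δ_gt0 a_ge0 Pδa ->]]].
have st_ge0 : 0 <= s / t by rewrite divr_ge0 // ltW.
have st_le1 : s / t <= 1 by rewrite ler_pdivrMr // mul1r.
apply: le_trans (ler_wpM2l st_ge0 (envelope_le (ltW t_gt0) δ_gt0 a_ge0 Pδa)) _.
rewrite mulrDr lerD ?ler_piMl //.
suff -> : s / t * (B * t / δ) = B * s / δ by [].
by field; rewrite !gt_eqF.
Qed.

Lemma envelope0 : envelope 0 = 0.
Proof.
apply/eqP; rewrite eq_le envelope_ge0 // andbT.
apply/ler_addgt0Pr => e e_gt0; rewrite add0r.
have [δ δ_gt0 Pδe] := P_small e_gt0.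
by apply: le_trans (envelope_le (lexx 0) δ_gt0 (ltW e_gt0) Pδe) _; rewrite mulr0 mul0r addr0.
Qed.

Lemma envelope_lipschitz r s t : 0 < r -> r <= s -> r <= t ->
  `|envelope t - envelope s| <= envelope r / r * `|t - s|.
Proof.
move=> r_gt0 le_rs le_rt.
wlog le_st : s t le_rs le_rt / s <= t.
  move=> wlog_st; have [|/ltW le_ts] := leP s t; first exact: wlog_st.
  by rewrite distrC [X in _ * X]distrC wlog_st.
have s_gt0 := lt_le_trans r_gt0 le_rs.
rewrite !ger0_norm ?subr_ge0 //; last exact: le_envelope (ltW s_gt0) le_st.
have ratio_s : envelope s / s <= envelope r / r.
  by rewrite ler_pdivrMr // mulrAC ler_pdivlMr // mulrC [_ * s]mulrC envelope_ratio.
apply: le_trans (ler_wpM2r _ ratio_s); last by rewrite subr_ge0.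
have := envelope_ratio s_gt0 le_st.
rewrite -ler_pdivlMl // => le_ts.
apply: le_trans (lerB le_ts (lexx _)) _.
suff -> : s^-1 * (t * envelope s) - envelope s = envelope s / s * (t - s) by [].
by field; rewrite gt_eqF.
Qed.

Lemma continuous_envelope_norm : continuous (fun s : R => envelope `|s| : R).
Proof.
move=> x; apply/cvgrPdist_lt => e e_gt0; apply/nbhs_ballP.
have [->|x_neq0] := eqVneq x 0.
  have e2_gt0 : 0 < e / 2 by rewrite divr_gt0.
  have [δ δ_gt0 Pδ] := P_small e2_gt0.
  exists (e / 2 * δ / (B + 1)); first by rewrite /= divr_gt0 ?mulr_gt0 ?ltr_wpDl.
  move=> t; rewrite /ball /= sub0r normrN normr0 envelope0 sub0r normrN => t_small.
  rewrite ger0_norm ?envelope_ge0 //.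
  apply: le_lt_trans (envelope_le (normr_ge0 t) δ_gt0 (ltW e2_gt0) Pδ) _.
  suff : B * `|t| / δ < e / 2 by lra.
  rewrite ltr_pdivrMr // (le_lt_trans _ (_ : (B + 1) * `|t| < e / 2 * δ)) //.
    by rewrite ler_wpM2r ?lerDl.
  by rewrite mulrC -ltr_pdivlMr ?ltr_wpDl.
set r := `|x| / 2; set L := envelope r / r.
have r_gt0 : 0 < r by rewrite divr_gt0 ?normr_gt0.
have L_ge0 : 0 <= L by rewrite divr_ge0 ?envelope_ge0 ?ltW.
exists (Num.min r (e / (L + 1))); first by rewrite /= lt_min r_gt0 divr_gt0 ?ltr_wpDl.
move=> t; rewrite /ball /= lt_min => /andP [xt_r xt_e].
have x_rr : `|x| = r + r by rewrite /r -splitr.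
have le_r_x : r <= `|x| by rewrite x_rr lerDl ltW.
have le_r_t : r <= `|t|.
  have := ler_dist_dist x t; rewrite ler_norml x_rr => /andP [_ le_xt]; lra.
apply: le_lt_trans (envelope_lipschitz r_gt0 le_r_t le_r_x) _.
apply: le_lt_trans (ler_wpM2l L_ge0 (ler_dist_dist x t)) _.
apply: le_lt_trans (_ : L * `|x - t| <= (L + 1) * `|x - t|) _.
  by rewrite ler_wpM2r ?lerDl.
by rewrite mulrC -ltr_pdivlMr ?ltr_wpDl.
Qed.

Lemma Kinf_envelope : Kinf (fun s => envelope `|s| + s).
Proof.
have envelope_homo : {in `[0, +oo[ &, {homo (fun s => envelope `|s| + s) : s t / s < t}}.
  move=> s t; rewrite !in_itv /= !andbT => s_ge0 t_ge0 lt_st.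
  by rewrite !ger0_norm // ler_ltD // le_envelope // ltW.
split.
- apply: continuous_subspaceT => x.
  by apply: cvgD; [exact: continuous_envelope_norm|exact: cvg_id].
- exact/leW_mono_in/le_mono_in.
- by rewrite normr0 envelope0 addr0.
- move=> M; exists (`|M| + 1); split; first by rewrite addr_ge0.
  have := envelope_ge0 (normr_ge0 (`|M| + 1)); have := ler_norm M; lra.
Qed.

(* a tolerance δ with margin a covers eps <= δ directly, and eps > δ through
   the term B * eps / δ >= B *)
Lemma le_envelope_bound eps (T v : R) : 0 < eps -> 0 <= T -> v <= T * B ->
  (forall δ a, 0 < δ -> 0 <= a -> P δ a -> eps <= δ -> v <= T * a) ->
  v <= T * envelope eps.
Proof.
move=> eps_gt0 T_ge0 v_le_TB v_le_Ta.
have [T0|T_neq0] := eqVneq T 0; first by move: v_le_TB; rewrite T0 !mul0r.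
have T_gt0 : 0 < T by rewrite lt_def T_neq0.
rewrite mulrC -ler_pdivrMr //; apply: lb_le_inf; first exact: envelope_set_neq0.
move=> _ [δ [a [δ_gt0 a_ge0 Pδa ->]]].
have Beps_ge0 : 0 <= B * eps / δ by rewrite divr_ge0 ?mulr_ge0 // ltW.
rewrite ler_pdivrMr // mulrC mulrDr.
have [le_eps_δ|lt_δ_eps] := leP eps δ.
  by apply: ler_wpDr; [exact: mulr_ge0|exact: v_le_Ta δ_gt0 a_ge0 Pδa le_eps_δ].
have le_B : B <= B * eps / δ by rewrite ler_pdivlMr // ler_wpM2l // ltW.
apply: ler_wpDl; first exact: mulr_ge0.
by apply: le_trans v_le_TB _; rewrite ler_wpM2l.
Qed.
End Envelope.

Lemma sum_ord_succ_mod (V : nmodType) p (G : nat -> V) :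
  \sum_(j < p) G (j.+1 %% p)%N = \sum_(j < p) G j.
Proof. by rewrite [RHS](reindex_inj (@ordS_inj p)). Qed.

Section DistOrbit.
Variables (R : realType) (n m p : nat) (Pi : nat -> 'rV[R]_n * 'rV[R]_m).

Lemma dist_orbit_on_orbit j : (j < p)%N -> dist_orbit p Pi (Pi j) = 0.
Proof.
move=> jp; apply/eqP; rewrite eq_le; apply/andP; split.
  have := bigmin_le `|Pi j - Pi 0%N| (Ordinal jp) (fun i : 'I_p => `|Pi j - Pi i|).
  by rewrite /= subrr normr0.
by apply: le_bigmin => // i _.
Qed.

Lemma dist_orbit_witness z : (0 < p)%N ->
  exists2 j, (j < p)%N & `|z - Pi j| <= dist_orbit p Pi z.
Proof.
case: p => [//|p'] _.
pose F (i : 'I_p'.+1) : R := `|z - Pi i|.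
have [i _ i_min] := arg_minP F (i0 := ord0) (P := xpredT) isT.
exists i => //; apply/bigmin_geP; split; first exact: i_min ord0 isT.
by move=> k _; exact: i_min.
Qed.

End DistOrbit.

Section OptimalOrbit.
Variables (R : realType) (n m : nat) (Xs : set 'rV[R]_n) (Us : set 'rV[R]_m).
Variables (f : 'rV[R]_n -> 'rV[R]_m -> 'rV[R]_n) (l : 'rV[R]_n -> 'rV[R]_m -> R).
Variables (p : nat) (Pi : nat -> 'rV[R]_n * 'rV[R]_m) (ls : R).
Hypothesis orbit_Pi : feasible_orbit Xs Us f p Pi.
Hypothesis orbit_cost : \sum_(k < p) l (Pi k).1 (Pi k).2 = p%:R * ls.
Hypothesis l_ge0 : forall x u, Xs x -> Us u -> 0 <= l x u.

Local Notation L j := (l (Pi j).1 (Pi j).2).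

Lemma orbit_cost_ge0 j : (j < p)%N -> 0 <= L j.
Proof. by case: orbit_Pi => _ XU _ /XU [Xj Uj]; exact: l_ge0. Qed.

Lemma optimal_cost_ge0 : 0 <= ls.
Proof.
have p_gt0 : (0 < p)%N by case: orbit_Pi.
rewrite -(pmulr_rge0 _ (ltr0Sn _ p.-1)) prednK // -orbit_cost.
by apply: sumr_ge0 => j _; exact: orbit_cost_ge0.
Qed.

Lemma orbit_partial_cost_le a b : (a <= b <= p)%N ->
  \sum_(a <= j < b) L j <= p%:R * ls.
Proof.
move=> /andP [le_ab le_bp]; rewrite -orbit_cost -(big_mkord xpredT (fun j => L j)).
have sum_ge0 c d : (d <= p)%N -> 0 <= \sum_(c <= j < d) L j.
  move=> le_dp; rewrite big_nat_cond; apply: sumr_ge0 => j /andP [/andP [_ lt_jd] _].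
  exact/orbit_cost_ge0/(leq_trans lt_jd).
rewrite (big_cat_nat (n := a) (leq0n a) (leq_trans le_ab le_bp)) (big_cat_nat le_ab le_bp) /=.
by rewrite addrCA lerDl addr_ge0 ?sum_ge0 // (leq_trans le_ab le_bp).
Qed.

Variables (lam : 'rV[R]_n -> R) (alpha : R -> R).
Hypothesis alpha0 : alpha 0 = 0.
Hypothesis dissipative : forall x u, Xs x -> Us u -> Xs (f x u) ->
  alpha (dist_orbit p Pi (x, u)) <= l x u - ls + lam x - lam (f x u).

Local Notation G j := (lam (Pi j).1).

(* the dissipation slacks along the optimal orbit are nonnegative and,
   by optimality and cyclic telescoping, sum to zero *)
Lemma orbit_cost_storage j : (j < p)%N -> L j = ls + G (j.+1 %% p)%N - G j.
Proof.
case: orbit_Pi => p_gt0 XU f_orbit.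
pose D j := L j - ls + G j - G (j.+1 %% p)%N.
have D_ge0 i : (i < p)%N -> 0 <= D i.
  move=> lt_ip; have [Xi Ui] := XU i lt_ip.
  have [Xi' _] := XU _ (ltn_pmod i.+1 p_gt0).
  have := dissipative Xi Ui; rewrite -f_orbit // => /(_ Xi').
  by rewrite -surjective_pairing dist_orbit_on_orbit // alpha0.
have D_sum : \sum_(i < p) D i = 0.
  rewrite /D (eq_bigr (fun i : 'I_p => (L i - ls) + (G i - G (i.+1 %% p)%N))); last first.
    by move=> i _; rewrite addrA.
  rewrite big_split /= !sumrB orbit_cost (sum_ord_succ_mod _ (fun j => G j)).
  by rewrite sumr_const card_ord mulr_natl !subrr addr0.
move=> lt_jp; have := psumr_eq0P (P := predT) (F := fun i : 'I_p => D i)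
  (fun i _ => D_ge0 i (ltn_ord i)) D_sum (i := Ordinal lt_jp) isT.
rewrite /D /= => D_j0; lra.
Qed.

Lemma storage_telescope a b : (a <= b < p)%N ->
  G b - G a = \sum_(a <= j < b) (L j - ls).
Proof.
move=> /andP [le_ab lt_bp]; apply: esym.
apply: (telescope_sumr_eq (fun j => G j)) le_ab _ => j /andP [_ lt_jb].
rewrite orbit_cost_storage ?modn_small ?(ltn_trans lt_jb) //; first by ring.
exact: leq_ltn_trans lt_jb lt_bp.
Qed.

Lemma storage_orbit_gap a b : (a < p)%N -> (b < p)%N ->
  G b - G a <= (p%:R - 1) * ls.
Proof.
move=> lt_ap lt_bp; have ls_ge0 := optimal_cost_ge0.
have [le_ab|lt_ba] := leqP a b.
  rewrite storage_telescope ?le_ab // sumrB sumr_const_nat -[ls *+ _]mulr_natr mulrBl mul1r.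
  move: (le_ab); rewrite leq_eqVlt => /orP [/eqP <-|lt_ab].
    rewrite big_geq // subnn mulr0 subr0 subr_ge0 ler_peMl // ler1n.
    exact: leq_ltn_trans (leq0n a) lt_ap.
  apply: lerB; first by apply: orbit_partial_cost_le; rewrite le_ab (ltnW lt_bp).
  by rewrite ler_peMr // ler1n subn_gt0.
rewrite -opprB storage_telescope ?(ltnW lt_ba) // sumrB sumr_const_nat -[ls *+ _]mulr_natr.
have sum_ge0 : 0 <= \sum_(b <= i < a) L i.
  rewrite big_nat_cond; apply: sumr_ge0 => i /andP [/andP [_ lt_ia] _].
  exact/orbit_cost_ge0/(ltn_trans lt_ia).
rewrite opprB lerBlDr mulrC; apply: ler_wpDr sum_ge0 _.
apply: ler_wpM2r => //; rewrite lerBrDr natr1 ler_nat.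
exact: leq_ltn_trans (leq_subr b a) lt_ap.
Qed.

Lemma tracking_cost_le T (c : nat -> R) (J : nat -> nat) γ :
  (forall k, (k <= T)%N -> (J k < p)%N) ->
  (forall k, (k <= T)%N -> c k <= L (J k) + γ) ->
  (forall k, (k < T)%N -> (Pi (J k.+1)).1 = (Pi ((J k).+1 %% p)%N).1) ->
  \sum_(k < T.+1) c k <= (T.+1%:R + p%:R - 1) * ls + T.+1%:R * γ.
Proof.
move=> J_lt c_le J_succ; have J_lt0 := J_lt 0%N isT.
have storage_sum : \sum_(k < T.+1) (G ((J k).+1 %% p)%N - G (J k)) =
    G ((J T).+1 %% p)%N - G (J 0%N).
  rewrite big_ord_recr /= -(big_mkord xpredT (fun k => G ((J k).+1 %% p)%N - G (J k))).
  rewrite (telescope_sumr_eq (fun k => G (J k))) // => [|k /andP [_ lt_kT]].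
    by rewrite addrC addrA subrK.
  by rewrite /= J_succ.
apply: le_trans (ler_sum _ (fun (k : 'I_T.+1) _ => c_le k (ltn_ord k))) _.
rewrite (eq_bigr (fun k : 'I_T.+1 => (G ((J k).+1 %% p)%N - G (J k)) + (ls + γ))); last first.
  by move=> k _; rewrite orbit_cost_storage ?(J_lt k (ltn_ord k)) //; ring.
have -> : (T.+1%:R + p%:R - 1) * ls + T.+1%:R * γ = (p%:R - 1) * ls + T.+1%:R * (ls + γ).
  by ring.
rewrite big_split /= storage_sum sumr_const card_ord -[(ls + γ) *+ _]mulr_natl.
by rewrite lerD2r storage_orbit_gap ?J_lt0 ?ltn_pmod // (leq_ltn_trans _ J_lt0).
Qed.
End OptimalOrbit.

Lemma within_continuous_ball (K : numFieldType) (V W : normedModType K)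
    (A : set V) (g : V -> W) z0 :
  {within A, continuous g} -> A z0 -> forall e, 0 < e ->
  exists2 r, 0 < r & forall z, A z -> `|z0 - z| < r -> `|g z0 - g z| < e.
Proof.
move=> /subspace_continuousP g_cont Az0 e e_gt0.
have := g_cont z0 Az0; move=> /cvgrPdist_lt /(_ e e_gt0).
rewrite near_withinE => /nbhs_ballP [r r_gt0 g_ball].
by exists r => // z Az z_near; apply: g_ball => //; rewrite -ball_normE.
Qed.

Section NearOrbit.
Variables (R : realType) (n m : nat) (Xs : set 'rV[R]_n) (Us : set 'rV[R]_m).
Variables (f : 'rV[R]_n -> 'rV[R]_m -> 'rV[R]_n) (l : 'rV[R]_n -> 'rV[R]_m -> R).
Variables (p : nat) (Pi : nat -> 'rV[R]_n * 'rV[R]_m).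
Hypothesis f_cont : {within Xs `*` Us, continuous (fun z => f z.1 z.2)}.
Hypothesis l_cont : {within Xs `*` Us, continuous (fun z => l z.1 z.2)}.
Hypothesis orbit_Pi : feasible_orbit Xs Us f p Pi.

Local Notation L j := (l (Pi j).1 (Pi j).2).

Lemma orbit_in_domain j : (j < p)%N -> (Xs `*` Us) (Pi j).
Proof. by case: orbit_Pi => _ XU _ /XU. Qed.

Lemma near_orbit_cost_le γ : 0 < γ -> \forall δ \near 0^'+,
  forall (j : 'I_p) z, (Xs `*` Us) z -> `|z - Pi j| <= δ -> l z.1 z.2 <= L j + γ.
Proof.
move=> γ_gt0; apply: filter_forall => j.
have [r r_gt0 l_near] := within_continuous_ball l_cont (orbit_in_domain (ltn_ord j)) γ_gt0.
apply: filterS (nbhs_right_lt r_gt0) => δ lt_δr z XUz le_zδ.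
have := l_near z XUz; rewrite distrC => /(_ (le_lt_trans le_zδ lt_δr)).
by rewrite distrC ltr_distl => /andP [_ /ltW].
Qed.

(* two orbit points with distinct states are a positive distance apart, while
   by continuity of f a step from near Pi j lands near Pi (j + 1) *)
Lemma near_orbit_successor : \forall δ \near (0 : R)^'+,
  forall (i j : 'I_p) z w, (Xs `*` Us) z -> `|z - Pi j| <= δ -> `|w - Pi i| <= δ ->
    w.1 = f z.1 z.2 -> (Pi i).1 = (Pi (j.+1 %% p)%N).1.
Proof.
have [_ _ f_orbit] := orbit_Pi.
apply: filter_forall => i; apply: filter_forall => j.
set y := (Pi (j.+1 %% p)%N).1.
have [->|neq_iy] := eqVneq (Pi i).1 y; first exact: nearW.
set d := `|(Pi i).1 - y|.
have d2_gt0 : 0 < d / 2 by rewrite divr_gt0 // normr_gt0 subr_eq0.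
have [r r_gt0 f_near] := within_continuous_ball f_cont (orbit_in_domain (ltn_ord j)) d2_gt0.
have rd_gt0 : 0 < Num.min r (d / 2) by rewrite lt_min r_gt0.
apply: filterS (nbhs_right_lt rd_gt0) => δ; rewrite lt_min => /andP [lt_δr lt_δd].
move=> z w XUz le_zδ le_wδ wz; exfalso.
have w_near : `|(Pi i).1 - w.1| < d / 2.
  rewrite distrC; apply: le_lt_trans lt_δd; apply: le_trans le_wδ.
  by rewrite prod_normE le_max lexx.
have y_near : `|w.1 - y| < d / 2.
  rewrite distrC /y f_orbit // wz; apply: f_near => //.
  by rewrite distrC; exact: le_lt_trans le_zδ lt_δr.
have := ler_distD w.1 (Pi i).1 y; rewrite -/d; lra.
Qed.

Variable ls : R.

Definition near_orbit_cost_bound (δ a : R) : Prop :=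
  forall T xh uh, Xs xh -> feasible_inputs Xs Us f T xh uh ->
    (forall k, (k < T)%N -> dist_orbit p Pi (traj f xh uh k, uh k) <= δ) ->
    \sum_(k < T) l (traj f xh uh k) (uh k) <= (T%:R + p%:R - 1) * ls + T%:R * a.

Hypothesis orbit_cost : \sum_(k < p) l (Pi k).1 (Pi k).2 = p%:R * ls.
Hypothesis l_ge0 : forall x u, Xs x -> Us u -> 0 <= l x u.
Lemma near_orbit_cost_bound_ub B δ : (forall x u, Xs x -> Us u -> l x u <= B) ->
  near_orbit_cost_bound δ B.
Proof.
move=> l_le_B T xh uh _ [uh_in traj_in] _.
have p_gt0 : (0 < p)%N by case: orbit_Pi.
have ls_ge0 := optimal_cost_ge0 orbit_Pi orbit_cost l_ge0.
apply: ler_wpDl; first by rewrite mulr_ge0 // -addrA addr_ge0 // subr_ge0 ler1n.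
apply: le_trans (_ : _ <= \sum_(k < T) B) _; last by rewrite sumr_const card_ord mulr_natl.
apply: ler_sum => k _.
exact: l_le_B (traj_in k (ltnW (ltn_ord k))) (uh_in k (ltn_ord k)).
Qed.

Variables (lam : 'rV[R]_n -> R) (alpha : R -> R).
Hypothesis alpha0 : alpha 0 = 0.
Hypothesis dissipative : forall x u, Xs x -> Us u -> Xs (f x u) ->
  alpha (dist_orbit p Pi (x, u)) <= l x u - ls + lam x - lam (f x u).

Lemma exists_near_orbit_cost_bound γ : 0 < γ ->
  exists2 δ, 0 < δ & near_orbit_cost_bound δ γ.
Proof.
move=> γ_gt0; have p_gt0 : (0 < p)%N by case: orbit_Pi.
have [δ [δ_gt0 [l_near succ_near]]] := filter_ex
  (filterI (nbhs_right_gt 0) (filterI (near_orbit_cost_le γ_gt0) near_orbit_successor)).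
exists δ => // -[|T] xh uh _ [uh_in traj_in] traj_near.
  rewrite big_ord0 mul0r addr0 add0r mulr_ge0 ?subr_ge0 ?ler1n //.
  exact: optimal_cost_ge0 orbit_Pi orbit_cost l_ge0.
pose z k := (traj f xh uh k, uh k).
have z_in k : (k <= T)%N -> (Xs `*` Us) (z k).
  by move=> le_kT; split; [apply: traj_in; rewrite leqW|apply: uh_in].
have /choice [J J_near] : forall k, exists j, (k <= T)%N ->
    (j < p)%N /\ `|z k - Pi j| <= δ.
  move=> k; have [le_kT|_] := boolP (k <= T)%N; last by exists 0%N.
  have [j lt_jp z_j] := dist_orbit_witness Pi (z k) p_gt0.
  by exists j => _; split; last exact: le_trans z_j (traj_near k le_kT).
apply: (tracking_cost_le orbit_Pi orbit_cost l_ge0 alpha0 dissipative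
  (c := fun k => l (z k).1 (z k).2) (J := J)) => [k le_kT|k le_kT|k lt_kT].
- by case: (J_near k le_kT).
- have [lt_Jp z_near] := J_near k le_kT.
  exact: (l_near (Ordinal lt_Jp) (z k) (z_in k le_kT) z_near).
- have [lt_Jp z_near] := J_near k (ltnW lt_kT).
  have [lt_J'p z'_near] := J_near k.+1 lt_kT.
  exact: (succ_near (Ordinal lt_J'p) (Ordinal lt_Jp) (z k) (z k.+1) (z_in k (ltnW lt_kT))).
Qed.

End NearOrbit.

Lemma compact_continuous_ub (T : topologicalType) (K : realType) (A : set T)
    (g : T -> K) :
  compact A -> {within A, continuous g} -> exists2 B, 0 <= B & forall z, A z -> g z <= B.
Proof.
move=> A_compact g_cont.
have /ex_strict_bound_gt0 [B B_gt0 g_lt] := compact_bounded (continuous_compact g_cont A_compact).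
exists B => [|z Az]; first exact: ltW.
by apply/ltW/(le_lt_trans (ler_norm _))/g_lt; exists z.
Qed.

Theorem lemma26 (R : realType) (n m : nat)
  (Xs : set 'rV[R]_n) (Us : set 'rV[R]_m)
  (f : 'rV[R]_n -> 'rV[R]_m -> 'rV[R]_n) (l : 'rV[R]_n -> 'rV[R]_m -> R)
  (pstar : nat) (Pistar : nat -> 'rV[R]_n * 'rV[R]_m) :
  {within Xs `*` Us, continuous (fun z => f z.1 z.2)} ->
  {within Xs `*` Us, continuous (fun z => l z.1 z.2)} ->
  compact (Xs `*` Us) ->
  (forall x u, Xs x -> Us u -> 0 <= l x u) ->
  feasible_orbit Xs Us f pstar Pistar ->
  avg_cost l pstar Pistar = ell_star Xs Us f l ->
  (exists (lam : 'rV[R]_n -> R) (alpha : R -> R),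
      (exists M : R, forall x, Xs x -> `|lam x| <= M) /\
      Kinf alpha /\
      (forall x u, Xs x -> Us u -> Xs (f x u) ->
         alpha (dist_orbit pstar Pistar (x, u))
           <= l x u - ell_star Xs Us f l + lam x - lam (f x u))) ->
  exists alpha1 : R -> R, Kinf alpha1 /\
    forall (eps : R), 0 < eps ->
    forall (T : nat) (xh : 'rV[R]_n) (uh : nat -> 'rV[R]_m),
      Xs xh -> feasible_inputs Xs Us f T xh uh ->
      (forall k, (k < T)%N ->
         dist_orbit pstar Pistar (traj f xh uh k, uh k) <= eps) ->
      \sum_(k < T) l (traj f xh uh k) (uh k)
        <= (T%:R + pstar%:R - 1) * ell_star Xs Us f l + T%:R * alpha1 eps.
Proof.
move=> f_cont l_cont XU_compact l_ge0 orbit_Pi avg_opt [lam [alpha [_ [[_ _ alpha0 _] dissipative]]]].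
set ls := ell_star Xs Us f l in avg_opt dissipative *.
have p_gt0 : (0 < pstar)%N by case: orbit_Pi.
have orbit_cost : \sum_(k < pstar) l (Pistar k).1 (Pistar k).2 = pstar%:R * ls.
  by rewrite -avg_opt /avg_cost mulrC divfK // pnatr_eq0 -lt0n.
have [B B_ge0 l_le_B] := compact_continuous_ub XU_compact l_cont.
have P_small := exists_near_orbit_cost_bound f_cont l_cont orbit_Pi orbit_cost l_ge0 alpha0 dissipative.
exists (fun s => envelope B (near_orbit_cost_bound Xs Us f l pstar Pistar ls) `|s| + s).
split; first exact: Kinf_envelope.
move=> eps eps_gt0 T xh uh Xxh feas traj_near; rewrite gtr0_norm // mulrDr addrA.
apply: ler_wpDr; first by rewrite mulr_ge0 // ltW.
rewrite -lerBlDl; apply: le_envelope_bound => // [|δ a _ _ P_δa le_epsδ].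
  have l_le_B' x u : Xs x -> Us u -> l x u <= B by move=> Xx Uu; exact: (l_le_B (x, u)).
  rewrite lerBlDl.
  exact: (near_orbit_cost_bound_ub orbit_Pi orbit_cost l_ge0 l_le_B' Xxh feas traj_near).
rewrite lerBlDl; apply: P_δa => // k lt_kT.
exact: le_trans (traj_near k lt_kT) le_epsδ.
Qed.
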